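(* For every finite graph $G=(V,E)$, \[ d_{\mathrm{swap}}(G) \ge \left\lceil \frac{b^2(G) - 2}{2} \right\rceil. \]
   Context: Linear-connectivity swap network model: for $G=(V,E)$ with $|V|=n$, qubits occupy positions $0,\ldots,n-1$ on a line; a configuration is a bijection $\pi:V\to\{0,\ldots,n-1\}$; a swap layer is a set of pairwise disjoint pairs of adjacent positions $\{i,i+1\}$, and applying it exchanges the vertices at the two positions of each pair. A swap network for $G$ is an initial configuration $\pi_0$ (chosen freely) followed by swap layers $L_1,\ldots,L_d$ producing configurations $\pi_0,\ldots,\pi_d$, such that for every edge $\{v,w\}\in E$ there is some $t$ with $|\pi_t(v)-\pi_t(w)|=1$. Its swap depth is $d$, and $d_{\mathrm{swap}}(G)$ is the minimum swap depth over all swap networks for $G$. An order of $V$ is a bijection $r: V \to \{0,\ldots,|V|-1\}$; $R(V)$ is the set of all orders. For $W\subseteq V$, the order bandwidth is $b_r(W)=\max_{w\in W} r(w)-\min_{w\in W} r(w)$. Let $L_2(G)$ be the set of subgraphs of $G$ that are paths with two edges (three distinct vertices $v_1,v_2,v_3$ with $\{v_1,v_2\},\{v_2,v_3\}\in E$), and for $S\in L_2(G)$ let $V_S$ be its vertex set. The graph 2-bandwidth is $b^2(G)=\min_{r\in R(V)}\max_{S\in L_2(G)} b_r(V_S)$. *)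

From mathcomp Require Import all_boot.
Set Implicit Arguments. Unset Strict Implicit. Unset Printing Implicit Defensive.

(* A finite simple graph: vertex type T : finType, edge relation e : rel T
   (assumed symmetric and irreflexive in the theorem). Positions are
   0, ..., #|T|-1. *)

(* A swap layer is a list of positions i, each standing for the pair {i, i+1}. *)
Definition valid_layer (n : nat) (L : seq nat) : bool :=
  all (fun i => i.+1 < n) L &&
  all (fun i => all (fun j => (i == j) || (i.+1 < j) || (j.+1 < i)) L) L.

Definition swap_pos (L : seq nat) (p : nat) : nat :=
  if p \in L then p.+1
  else if (0 < p) && (p.-1 \in L) then p.-1 else p.

Definition apply_layer (T : Type) (pi : T -> nat) (L : seq nat) : T -> nat :=
  fun v => swap_pos L (pi v).

Definition config_at (T : Type) (pi0 : T -> nat) (Ls : seq (seq nat)) (t : nat)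
  : T -> nat := foldl (@apply_layer T) pi0 (take t Ls).

Definition adjacent_pos (a b : nat) : bool := (a == b.+1) || (b == a.+1).

Definition is_swap_network (T : finType) (e : rel T)
  (pi0 : {ffun T -> 'I_#|T|}) (Ls : seq (seq nat)) : Prop :=
  injective pi0 /\
  all (valid_layer #|T|) Ls /\
  (forall v w, e v w ->
     exists t, t <= size Ls /\
       adjacent_pos (config_at (fun x => nat_of_ord (pi0 x)) Ls t v)
                    (config_at (fun x => nat_of_ord (pi0 x)) Ls t w)).

Definition bw3 (T : finType) (r : {ffun T -> 'I_#|T|}) (a b c : T) : nat :=
  maxn (maxn (r a) (r b)) (r c) - minn (minn (r a) (r b)) (r c).

Definition order_cost (T : finType) (e : rel T) (r : {ffun T -> 'I_#|T|}) : nat :=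
  \max_(x : T * T * T | [&& x.1.1 != x.1.2, x.1.2 != x.2, x.1.1 != x.2,
                          e x.1.1 x.1.2 & e x.1.2 x.2])
     bw3 r x.1.1 x.1.2 x.2.

(* b^2(G) = min over orders r (bijections V -> {0..n-1}). The default #|T| of
   the min is never reached when T is nonempty-or-empty, since an order exists
   and every cost is < #|T| (or = 0). *)
Definition b2 (T : finType) (e : rel T) : nat :=
  \big[minn/#|T|]_(r : {ffun T -> 'I_#|T|} | injectiveb r) order_cost e r.

From mathcomp Require Import all_boot all_order all_algebra zify.
Import Order.TTheory.

Set Implicit Arguments.
Unset Strict Implicit.
Unset Printing Implicit Defensive.

(* A swap layer moves every vertex by at most one position, so between times
   s and t a vertex moves by at most |s - t|.  If a-b-c is a 2-path, with a, b
   adjacent at time t1 and b, c adjacent at time t2, then following a from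
   time 0 to t1, b from t1 to t2 and c from t2 back to 0 bounds the initial
   distance of a and c by t1 + 1 + |t1 - t2| + 1 + t2 = 2 max(t1, t2) + 2.
   Hence the initial configuration, itself an order, costs at most 2 d + 2. *)

Lemma dist_swap_pos L p : `|swap_pos L p - p| <= 1.
Proof. by rewrite /swap_pos; case: ifP => _; [|case: ifP => [/andP[]|_]]; lia. Qed.

Lemma dist_adjacent_pos a b : adjacent_pos a b -> `|a - b| = 1.
Proof. by case/orP=> /eqP->; rewrite ?distSn ?distnS. Qed.

Lemma bw3_leq (T : finType) (r : {ffun T -> 'I_#|T|}) a b c k :
  `|r a - r b| <= k -> `|r b - r c| <= k -> `|r a - r c| <= k ->
  bw3 r a b c <= k.
Proof. rewrite /bw3; lia. Qed.

Lemma b2_leq_order_cost (T : finType) (e : rel T) (r : {ffun T -> 'I_#|T|}) :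
  injective r -> b2 e <= order_cost e r.
Proof. by move=> /injectiveP; apply: (@bigmin_le_cond _ nat). Qed.

Section Configurations.

Variables (T : Type) (pi0 : T -> nat) (Ls : seq (seq nat)).
Local Notation pi := (config_at pi0 Ls).

Lemma config_at0 : pi 0 =1 pi0.
Proof. by move=> u; rewrite /config_at take0. Qed.

Lemma dist_config_at_step t u : `|pi t.+1 u - pi t u| <= 1.
Proof.
rewrite /config_at; case: (ltnP t (size Ls)) => [lt_t | le_t].
  by rewrite (take_nth [::] lt_t) foldl_rcons; apply: dist_swap_pos.
by rewrite !take_oversize ?distnn // leqW.
Qed.

Lemma dist_config_at s t u : `|pi s u - pi t u| <= `|s - t|.
Proof.
wlog le_st : s t / s <= t.
  move=> hwlog; case: (leqP s t) => [/hwlog // | /ltnW /hwlog].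
  by rewrite distnC [X in _ <= X]distnC.
rewrite (distnEr le_st) -{1}(subnK le_st); elim: (t - s) => [|k IHk].
  by rewrite add0n distnn.
apply: leq_trans (leqD_dist _ (pi (k + s) u) _) _.
by rewrite -addn1 leq_add // distnC addn1 addSn dist_config_at_step.
Qed.

Lemma dist_config_at_adjacent s t u v :
  adjacent_pos (pi t u) (pi t v) -> `|pi s u - pi s v| <= (`|s - t|).*2.+1.
Proof.
move=> /dist_adjacent_pos adj_uv.
have := dist_config_at s t u; have := dist_config_at s t v; lia.
Qed.

Lemma dist_config_at0_path a b c t1 t2 :
  adjacent_pos (pi t1 a) (pi t1 b) -> adjacent_pos (pi t2 b) (pi t2 c) ->
  `|pi0 a - pi0 c| <= (maxn t1 t2).*2 + 2.
Proof.
move=> /dist_adjacent_pos adj_ab /dist_adjacent_pos adj_bc.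
have := dist_config_at 0 t1 a; have := dist_config_at t1 t2 b.
have := dist_config_at t2 0 c; rewrite !config_at0; lia.
Qed.

End Configurations.

Lemma order_cost_swap_network (T : finType) (e : rel T)
    (pi0 : {ffun T -> 'I_#|T|}) (Ls : seq (seq nat)) :
  is_swap_network e pi0 Ls -> order_cost e pi0 <= (size Ls).*2 + 2.
Proof.
case=> _ [_ realized]; apply/bigmax_leqP => [[[a b] c]] /=.
case/and5P=> _ _ _ /realized[t1 [le_t1 adj_ab]] /realized[t2 [le_t2 adj_bc]].
have := dist_config_at0_path adj_ab adj_bc.
have := dist_config_at_adjacent 0 adj_ab; have := dist_config_at_adjacent 0 adj_bc.
rewrite !config_at0 !dist0n => dist_bc dist_ab dist_ac.
apply: bw3_leq; lia.
Qed.

Theorem lemma2 (T : finType) (e : rel T)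
  (e_sym : symmetric e) (e_irr : irreflexive e)
  (pi0 : {ffun T -> 'I_#|T|}) (Ls : seq (seq nat)) :
  is_swap_network e pi0 Ls ->
  (b2 e - 2 + 1) %/ 2 <= size Ls.
Proof.
move=> network; have [pi0_inj _] := network.
have := leq_trans (b2_leq_order_cost e pi0_inj) (order_cost_swap_network network).
lia.
Qed.
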